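(* Let $M$ be a closed rooted combinatorial map with $|M|$ edges, let $N$ be a rooted map, and let $k,\ell$ be integers for which the operations below are defined. Then $$\mathrm{Ins}_{M,\ell}\big(R_k(N)\big)=R_k\big(\mathrm{Ins}_{M,\ell-2}(N)\big)\quad\text{if }k\le \ell-2,$$ $$\mathrm{Ins}_{M,\ell}\big(R_k(N)\big)=R_{k+2|M|}\big(\mathrm{Ins}_{M,\ell-1}(N)\big)\quad\text{if }1\le \ell-1\le k.$$
   Context: A rooted combinatorial map is $(H,\sigma,\alpha,r)$: $H$ a finite set of half-edges, $\sigma$ a permutation, $\alpha$ an involution, $r$ a fixed point of $\alpha$ (the root), with $\langle\sigma,\alpha\rangle$ transitive; vertices are $\sigma$-orbits, edges are $\alpha$-orbits (fixed points of $\alpha$ are dangling edges); it is closed if $r$ is the only fixed point of $\alpha$. The size is the number of edges (root included). Maps are drawn so that $\sigma$ gives the counterclockwise cyclic order of half-edges around each vertex; a corner is the angular sector between a half-edge $h$ and $\sigma(h)$; the root corner lies between $r$ and $\sigma(r)$, and the root edge is the edge containing $\sigma(r)$. A map of size $n$ has $2n-1$ corners (the one-half-edge map has one corner, its root corner). Bridge First Labeling (BFL): working on a copy of the map, label the root corner $1$. If the current corner has label $k$, let $e$ be the (possibly dangling) edge adjacent to this corner in the counterclockwise order. If $e$ is a bridge of the current map, go along $e$ to the next corner (at its other endpoint) and label it $k+1$; if $e$ is dangling, go to the following corner counterclockwise and label it $k+1$; otherwise cut $e$ into two dangling edges, go to the following corner counterclockwise and label it $k+1$. Stop upon reaching the root.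 For a map $N$ of size $n$ and $1\le k\le 2n-1$, $R_k(N)$ is obtained by adding a new edge linking the root corner of $N$ and the $k$-th corner of the BFL of $N$ (the new edge becomes the root edge). For a map $M'$, $\mathrm{Ins}_{M',k}(N)$ is obtained by inserting $M'$ at the $k$-th BFL corner of $N$ via a bridge: the root of $M'$ is attached in that corner, becoming a bridge; the root of the result is that of $N$. *)

From mathcomp Require Import all_boot.
Set Implicit Arguments. Unset Strict Implicit. Unset Printing Implicit Defensive.

Record rmap := RMap { hs : finType; sg : hs -> hs; al : hs -> hs; rt : hs }.
Arguments sg : clear implicits.
Arguments al : clear implicits.
Arguments rt : clear implicits.

Definition gen_rel (T : finType) (s a : T -> T) : rel T :=
  fun u v => (v == s u) || (v == a u).

Definition rooted_map (G : rmap) : Prop :=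
  [/\ injective (sg G),
      involutive (al G),
      al G (rt G) = rt G &
      forall x y, connect (gen_rel (sg G) (al G)) x y ]. (* transitivity *)

Definition closed_map (G : rmap) : Prop :=
  rooted_map G /\ forall h, al G h = h -> h = rt G.

(* size = number of edges = number of alpha-orbits *)
Definition msize (G : rmap) : nat := fcard (al G) (@predT (hs G)).

Definition iso (G1 G2 : rmap) : Prop :=
  exists f : hs G1 -> hs G2,
    [/\ bijective f,
        forall h, f (sg G1 h) = sg G2 (f h),
        forall h, f (al G1 h) = al G2 (f h) &
        f (rt G1) = rt G2].

(* Corners are identified with half-edges: corner h lies between h and sigma h.
   The current copy of the map keeps sigma and has a current alpha [a]. *)

(* cut the edge {h, a h} into two dangling edges *)
Definition cut (T : finType) (a : T -> T) (h : T) : T -> T :=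
  fun x => if (x == h) || (x == a h) then x else a x.

Definition is_bridge (G : rmap) (a : hs G -> hs G) (h : hs G) : bool :=
  (a h != h) && ~~ connect (gen_rel (sg G) (cut a h)) h (a h).

(* one BFL step from the current corner h with current alpha a; the edge
   adjacent to corner h in ccw order is the one containing sigma h.
   - bridge: go along it, arriving at corner a (sigma h);
   - dangling: go to the following corner sigma h (= a (sigma h));
   - otherwise: cut it, then go to the following corner sigma h. *)
Definition bfl_step (G : rmap) (st : (hs G -> hs G) * hs G)
  : (hs G -> hs G) * hs G :=
  let: (a, h) := st in
  let h' := sg G h in
  let a' := if (a h' == h') || is_bridge a h' then a else cut a h' in
  (a', a' h').

Fixpoint bfl_iter (G : rmap) (n : nat) (st : (hs G -> hs G) * hs G)
  : seq (hs G) :=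
  if n is n'.+1 then let st' := bfl_step st in st'.2 :: bfl_iter n' st'
  else [::].

(* the BFL: the sequence of labelled corners (label i = position i-1),
   starting at the root corner and stopping upon reaching the root again *)
Definition bfl (G : rmap) : seq (hs G) :=
  let tl := bfl_iter #|hs G| (al G, rt G) in
  rt G :: take (index (rt G) tl) tl.

(* the k-th corner of the BFL (1-based) *)
Definition corner (G : rmap) (k : nat) : hs G := nth (rt G) (bfl G) k.-1.

Definition corner_ok (G : rmap) (k : nat) : bool := (0 < k <= size (bfl G)).

(* New half-edges: None (= a, placed in the root corner, right after the root)
   and Some None (= b, placed in the k-th corner c).  When c is the root
   corner, the cyclic order there is r, a, b, sigma r; the new edge {a,b}
   is the root edge (it contains sigma' r = a). *)
Definition R_sg (G : rmap) (c : hs G) (x : option (option (hs G)))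
  : option (option (hs G)) :=
  match x with
  | None => if c == rt G then Some None else Some (Some (sg G (rt G)))
  | Some None => Some (Some (sg G c))
  | Some (Some h) =>
      if h == rt G then None
      else if h == c then Some None else Some (Some (sg G h))
  end.

Definition R_al (G : rmap) (x : option (option (hs G)))
  : option (option (hs G)) :=
  match x with
  | None => Some None
  | Some None => None
  | Some (Some h) => Some (Some (al G h))
  end.

Definition R_ (k : nat) (G : rmap) : rmap :=
  @RMap (option (option (hs G))) (R_sg (corner G k)) (@R_al G)
        (Some (Some (rt G))).

(* New half-edge None placed in the l-th corner c of N, paired by alpha with
   the root of M (which thus becomes a bridge); the root is that of N. *)
Definition Ins_sg (M N : rmap) (c : hs N) (x : option (hs N + hs M))
  : option (hs N + hs M) :=
  match x with
  | None => Some (inl (sg N c))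
  | Some (inl h) => if h == c then None else Some (inl (sg N h))
  | Some (inr h) => Some (inr (sg M h))
  end.

Definition Ins_al (M N : rmap) (x : option (hs N + hs M))
  : option (hs N + hs M) :=
  match x with
  | None => Some (inr (rt M))
  | Some (inl h) => Some (inl (al N h))
  | Some (inr h) => if h == rt M then None else Some (inr (al M h))
  end.

Definition Ins (M : rmap) (l : nat) (N : rmap) : rmap :=
  @RMap (option (hs N + hs M)) (Ins_sg (corner N l)) (@Ins_al M N)
        (Some (inl (rt N))).

From mathcomp Require Import all_boot zify.
From Stdlib Require Import FunctionalExtensionality.
Set Implicit Arguments. Unset Strict Implicit. Unset Printing Implicit Defensive.

(* The BFL of a rooted map visits every corner exactly once before it returns
   to the root.  Along the walk every edge already crossed is dangling or a
   bridge of the current map, so the positions are the iterates of the face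
   permutation alpha_n \o sigma and cannot repeat before the return; at the
   return, the visited corners are closed under sigma (a face entered through a
   bridge comes back through it) and under alpha_n, and alpha_n still connects
   the map since only non-bridges were cut, so every corner has been visited.
   Hence the BFL of R_k(N) is that of N with the corners after the two new
   half-edges inserted in positions 2 and k+2, and the BFL of Ins_{M,l}(N) is
   that of N with the 2|M|-1 corners of M and the corner after the new bridge
   inserted after position l.  Reading off the corners involved, both sides of
   each identity are the same surgery on N, and relabelling the new half-edges
   is an isomorphism. *)

Lemma connect_stable (T : finType) (e : rel T) (P : pred T) x y :
  (forall u v, P u -> e u v -> P v) -> P x -> connect e x y -> P y.
Proof.
move=> Pe + /connectP[p + ->]; elim: p x => [|z p IH] x Px //=.
by case/andP=> /(Pe _ _ Px); apply: IH.
Qed.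

Lemma homo_connect (T1 T2 : finType) (e1 : rel T1) (e2 : rel T2) (f : T1 -> T2) :
  (forall x y, e1 x y -> connect e2 (f x) (f y)) ->
  forall x y, connect e1 x y -> connect e2 (f x) (f y).
Proof.
move=> fe x y; apply: (connect_stable (P := fun z => connect e2 (f x) (f z))).
  by move=> u v xu /fe; apply: connect_trans.
exact: connect0.
Qed.

Lemma iter_subn_id (T : Type) (f : T -> T) x i j : injective f ->
  i <= j -> iter i f x = iter j f x -> iter (j - i) f x = x.
Proof.
move=> f_inj; elim: i j => [|i IH] [|j] //.
by rewrite ltnS subSS /= => ij /f_inj; apply: IH.
Qed.

Section Cut.
Variables (T : finType) (a : T -> T).
Hypothesis a_inv : involutive a.

Lemma cut_in h x : (x == h) || (x == a h) -> cut a h x = x.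
Proof. by rewrite /cut => ->. Qed.

Lemma cut_out h x : x != h -> x != a h -> cut a h x = a x.
Proof. by rewrite /cut => /negbTE-> /negbTE->. Qed.

Lemma cut_fixed h x : a x = x -> cut a h x = x.
Proof. by rewrite /cut => ->; case: ifP. Qed.

Lemma cut_involutive h : involutive (cut a h).
Proof.
move=> x; have [->|xh] := eqVneq x h; first by rewrite /cut !eqxx.
have [->|xah] := eqVneq x (a h); first by rewrite /cut eqxx orbT /= eqxx orbT.
by rewrite cut_out // cut_out ?a_inv // (canF_eq a_inv) ?a_inv.
Qed.

Lemma cut_sym h : cut a (a h) =1 cut a h.
Proof. by move=> x; rewrite /cut a_inv orbC. Qed.

Variable s : T -> T.
Hypothesis s_inj : injective s.

Lemma gen_rel_connect_sym : connect_sym (gen_rel s a).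
Proof.
have rev_sub : subrel [rel u v | gen_rel s a v u] (connect (gen_rel s a)).
  move=> _ v /orP[] /eqP->; last by apply: connect1; rewrite /gen_rel a_inv eqxx orbT.
  have: fconnect s (s v) v by rewrite fconnect_sym // fconnect1.
  by apply: connect_sub => w _ /eqP<-; apply: connect1; rewrite /gen_rel eqxx.
by apply: symmetric_from_pre => x y xy; apply: (connect_sub rev_sub); rewrite connect_rev.
Qed.

End Cut.

Lemma rmap_card_gt0 (G : rmap) : 0 < #|hs G|.
Proof. by apply/card_gt0P; exists (rt G). Qed.

Section Bridge.
Variable G : rmap.
Local Notation T := (hs G).
Local Notation s := (sg G).
Hypothesis s_inj : injective s.
Variable a : T -> T.
Hypothesis a_inv : involutive a.

Lemma is_bridge_al h : is_bridge a (a h) = is_bridge a h.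
Proof.
rewrite /is_bridge a_inv eq_sym; congr (_ && ~~ _).
rewrite (eq_connect (e' := gen_rel s (cut a h))) => [|u v]; last first.
  by rewrite /gen_rel cut_sym.
exact: (gen_rel_connect_sym (cut_involutive a_inv h) s_inj (a h) h).
Qed.

Lemma is_bridge_cut h y :
  is_bridge a y -> y != h -> y != a h -> is_bridge (cut a h) y.
Proof.
move=> /andP[ayy nc] yh yah; have cy : cut a h y = a y by rewrite cut_out.
rewrite /is_bridge cy ayy /=; apply: contra nc.
apply: connect_sub => u _ /orP[] /eqP->.
  by apply: connect1; rewrite /gen_rel eqxx.
have [uy|/norP[uy uay]] := boolP ((u == y) || (u == cut a h y)).
  by rewrite cut_in //; apply: connect0.
rewrite cy in uay; rewrite cut_out ?cy //.
have [uh|/norP[uh uah]] := boolP ((u == h) || (u == a h)).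
  by rewrite cut_in //; apply: connect0.
by rewrite cut_out //; apply: connect1; rewrite /gen_rel cut_out ?eqxx ?orbT.
Qed.

(* Walking along the face a \o s from a x, one stays in the component of a x
   in the map where the bridge {x, a x} is cut, until one crosses back to x. *)
Lemma fconnect_bridge x : is_bridge a x -> fconnect (fun z => a (s z)) (a x) x.
Proof.
case/andP=> _ nc; set face := fun z => a (s z).
have face_inj : injective face := inj_comp (can_inj a_inv) s_inj.
set C := connect (gen_rel s (cut a x)) (a x).
have Cx : ~~ C x.
  by apply: contra nc; rewrite (gen_rel_connect_sym (cut_involutive a_inv x) s_inj).
have Cs u : C u -> C (s u).
  by move=> Cu; apply: connect_trans Cu (connect1 _); rewrite /gen_rel eqxx.
have Cface u : C u -> s u != a x -> C (face u).
  move=> Cu sux; have sx : s u != x by apply: contraNneq Cx => <-; apply: Cs.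
  rewrite /face -(cut_out sx sux); apply: connect_trans (Cs _ Cu) (connect1 _).
  by rewrite /gen_rel eqxx orbT.
apply/negPn/negP => nfx.
have C_orbit i : C (iter i face (a x)).
  elim: i => [|i IH]; first exact: connect0.
  rewrite iterS Cface //; apply: contraNneq nfx => sux.
  have fx : face (iter i face (a x)) = x by rewrite /face sux a_inv.
  by rewrite -{2}fx -iterS fconnect_iter.
have sz : s (finv face (a x)) = x.
  by apply: (can_inj a_inv); exact: (f_finv face_inj (a x)).
by case/negP: Cx; rewrite -sz; apply: Cs; apply: C_orbit.
Qed.

Lemma connect_cut_nonbridge h :
  (forall x y, connect (gen_rel s a) x y) -> a h != h -> ~~ is_bridge a h ->
  forall x y, connect (gen_rel s (cut a h)) x y.
Proof.
move=> conn ahh; rewrite /is_bridge ahh negbK => hah x y.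
apply: connect_sub (conn x y) => u _ /orP[] /eqP->.
  by apply: connect1; rewrite /gen_rel eqxx.
have [->|uh] := eqVneq u h; first exact: hah.
have [->|uah] := eqVneq u (a h).
  by rewrite a_inv (gen_rel_connect_sym (cut_involutive a_inv h) s_inj).
by apply: connect1; rewrite /gen_rel cut_out ?eqxx ?orbT.
Qed.

End Bridge.

Definition bfl_move (G : rmap) (a : hs G -> hs G) (h : hs G) :=
  let a' := if (a h == h) || is_bridge a h then a else cut a h in (a', a' h).

Definition bfl_state (G : rmap) (n : nat) := iter n (@bfl_step G) (al G, rt G).
Notation bfl_alpha G n := (bfl_state G n).1.
Notation bfl_pos G n := (bfl_state G n).2.

Lemma bfl_stateS (G : rmap) n :
  bfl_state G n.+1 = bfl_move (bfl_alpha G n) (sg G (bfl_pos G n)).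
Proof. by rewrite /bfl_state iterS; case: (iter n _ _). Qed.

Lemma bfl_iterE (G : rmap) n :
  bfl_iter n (al G, rt G) = [seq bfl_pos G i.+1 | i <- iota 0 n].
Proof.
rewrite /bfl_state; elim: n (al G, rt G) => [//|n IH] st /=; rewrite IH.
rewrite -(addn0 1) iotaDl -map_comp; congr (_ :: _); apply: eq_map => i /=.
by rewrite add0n -iterSr iterS.
Qed.

Lemma cornerE (G : rmap) k : corner_ok G k -> corner G k = bfl_pos G k.-1.
Proof.
case/andP; rewrite /corner /bfl bfl_iterE; case: k => [//|[//|k]] _ /=.
set tl := map _ _; rewrite ltnS size_take => k_lt.
have k_tl : k < size tl by apply: leq_trans k_lt _; case: ifP => // /ltnW.
have k_idx : k < index (rt G) tl.
  move: k_lt; case: ifP => // /negbT; rewrite -leqNgt => tl_idx k_lt.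
  exact: leq_trans k_lt tl_idx.
have k_n : k < #|hs G| by rewrite size_map size_iota in k_tl.
by rewrite nth_take // (nth_map 0) ?size_iota // nth_iota.
Qed.

Section BFL.
Variable G : rmap.
Local Notation T := (hs G).
Local Notation s := (sg G).
Local Notation r := (rt G).
Local Notation pos n := (bfl_pos G n).
Local Notation alpha n := (bfl_alpha G n).
Hypothesis s_inj : injective s.
Hypothesis al_inv : involutive (al G).
Hypothesis al_r : al G r = r.
Hypothesis conn : forall x y, connect (gen_rel s (al G)) x y.

Lemma bfl_alphaS n :
  alpha n.+1 = if (alpha n (s (pos n)) == s (pos n)) || is_bridge (alpha n) (s (pos n))
               then alpha n else cut (alpha n) (s (pos n)).
Proof. by rewrite bfl_stateS. Qed.

Lemma bfl_posS n : pos n.+1 = alpha n.+1 (s (pos n)).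
Proof. by rewrite bfl_stateS. Qed.

Lemma bfl_alpha_involutive n : involutive (alpha n).
Proof.
elim: n => [//|n IH]; rewrite bfl_alphaS; case: ifP => _ //; exact: cut_involutive.
Qed.

Lemma bfl_alpha_root n : alpha n r = r.
Proof.
by elim: n => [//|n IH]; rewrite bfl_alphaS; case: ifP => _ //; apply: cut_fixed.
Qed.

Lemma bfl_alpha_connected n x y : connect (gen_rel s (alpha n)) x y.
Proof.
elim: n x y => [|n IH]; first exact: conn.
rewrite bfl_alphaS; case: ifP => [_ //|/norP[nfix nbr]].
move=> x y; exact: (connect_cut_nonbridge s_inj (bfl_alpha_involutive n) IH nfix nbr x y).
Qed.

Definition bfl_crossed n := forall j, j < n ->
  alpha n (s (pos j)) = pos j.+1 /\
  (alpha n (s (pos j)) == s (pos j)) || is_bridge (alpha n) (s (pos j)).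

Definition bfl_no_return n := forall i, 0 < i <= n -> pos i != r.

Lemma bfl_pos_iter n j : bfl_crossed n -> j <= n ->
  pos j = iter j (fun x => alpha n (s x)) r.
Proof.
move=> cr; elim: j => [//|j IH] jn.
by rewrite iterS -IH ?(ltnW jn) //; case: (cr j jn).
Qed.

Lemma bfl_pos_uniq n i j : bfl_crossed n -> bfl_no_return n ->
  i <= n -> j <= n -> pos i = pos j -> i = j.
Proof.
move=> cr nr; wlog ij : i j / i <= j.
  move=> hyp i_n j_n pij; case: (leqP i j) => [|/ltnW] ij; first exact: hyp.
  by apply/esym/hyp.
move=> _ jn; rewrite !(bfl_pos_iter cr) ?(leq_trans ij) //.
have face_inj := inj_comp (can_inj (bfl_alpha_involutive n)) s_inj.
move/(iter_subn_id face_inj ij); rewrite -bfl_pos_iter ?(leq_trans (leq_subr i j)) //.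
by apply: contra_eq => nij; apply: nr; lia.
Qed.

Lemma bfl_crossedS n : bfl_crossed n -> bfl_no_return n -> bfl_crossed n.+1.
Proof.
move=> cr nr j; rewrite ltnS leq_eqVlt => /orP[/eqP->|jn].
  split; first by rewrite bfl_posS.
  by rewrite bfl_alphaS; case: ifP => [?|_] //; rewrite cut_in ?eqxx.
have [step_j old_j] := cr j jn.
rewrite bfl_alphaS; case: ifP => [_|/norP[nfix nbr]]; first by split.
set h := s (pos n) in nfix nbr *; set a := alpha n in step_j old_j nfix nbr *.
have a_inv : involutive a := bfl_alpha_involutive n.
have jh : s (pos j) != h.
  apply/eqP => /s_inj /(bfl_pos_uniq cr nr (ltnW jn) (leqnn n)) jE.
  by rewrite jE ltnn in jn.
have jah : s (pos j) != a h.
  apply: contraTneq old_j => ->; rewrite a_inv (is_bridge_al s_inj a_inv) eq_sym.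
  exact/norP.
rewrite cut_out //; split=> //; case/orP: old_j => [-> //|br].
by rewrite is_bridge_cut ?orbT.
Qed.

Lemma bfl_crossed_no_return n : bfl_no_return n -> bfl_crossed n.
Proof.
elim: n => [_ j|n IH nr]; first by rewrite ltn0.
have nr' : bfl_no_return n by move=> i /andP[i0 i_n]; apply: nr; rewrite i0 ltnW.
exact: bfl_crossedS (IH nr') nr'.
Qed.

Lemma bfl_returns : exists m, (0 < m <= #|T|) && (pos m == r).
Proof.
have [/existsP[i /andP[i0 /eqP ir]]|none] :=
    boolP [exists i : 'I_#|T|.+1, (0 < i) && (pos i == r)].
  by exists i; rewrite i0 ir eqxx -ltnS ltn_ord.
have nr : bfl_no_return #|T|.
  move=> i /andP[i0 iT]; apply: contra none => ir; apply/existsP.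
  have iT' : i < #|T|.+1 by rewrite ltnS.
  by exists (Ordinal iT'); rewrite /= i0.
have cr := bfl_crossed_no_return nr.
have: uniq [seq pos i | i <- iota 0 #|T|.+1].
  rewrite map_inj_in_uniq ?iota_uniq // => i j; rewrite !mem_iota !add0n /= !ltnS.
  exact: bfl_pos_uniq cr nr.
move/card_uniqP; rewrite size_map size_iota => card_pos.
by have := max_card (mem [seq pos i | i <- iota 0 #|T|.+1]); rewrite card_pos ltnn.
Qed.

(* The corners visited before the return form a set closed under sigma and
   alpha m, and alpha m still connects the map. *)
Lemma bfl_return_card m : 0 < m -> bfl_crossed m -> pos m = r -> #|T| <= m.
Proof.
move=> m0 cr pm; set S := [seq pos j | j <- iota 0 m].
have inS j : j <= m -> pos j \in S.
  rewrite leq_eqVlt => /orP[/eqP->|jm]; last by apply: map_f; rewrite mem_iota.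
  by rewrite pm (_ : r = pos 0) //; apply: map_f; rewrite mem_iota.
have S_pos x : x \in S -> exists2 j, j < m & x = pos j.
  by case/mapP=> j; rewrite mem_iota add0n => /andP[_ jm] ->; exists j.
have faceS x : x \in S -> alpha m (s x) \in S.
  by case/S_pos=> j jm ->; rewrite (cr j jm).1; apply: inS.
have sS x : x \in S -> s x \in S.
  case/S_pos=> j jm ->; have [step_j /orP[/eqP fix_j|br_j]] := cr j jm.
    by rewrite -fix_j step_j; apply: inS.
  have := fconnect_bridge s_inj (bfl_alpha_involutive m) br_j.
  apply: (connect_stable (P := fun x => x \in S)) => [u v uS /eqP<-|].
    exact: faceS.
  by rewrite step_j; apply: inS.
have aS x : x \in S -> alpha m x \in S.
  case/S_pos=> [[|j]] jm ->; first by rewrite bfl_alpha_root (inS 0).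
  rewrite -(cr j (ltnW jm)).1 bfl_alpha_involutive.
  exact: sS (inS _ (ltnW (ltnW jm))).
have allS v : v \in S.
  apply: (connect_stable (P := fun x => x \in S)) (bfl_alpha_connected m r v).
    by move=> u w uS /orP[] /eqP->; [apply: sS | apply: aS].
  exact: (inS 0).
rewrite -(size_iota 0 m) -(size_map (fun j => pos j)).
apply: leq_trans (card_size S); apply/subset_leq_card/subsetP => v _; exact: allS.
Qed.

Lemma bfl_first_return : pos #|T| = r /\ bfl_no_return #|T|.-1.
Proof.
case: (ex_minnP bfl_returns) => m /andP[/andP[m0 mT] /eqP pm] m_min.
have nr : bfl_no_return m.-1.
  move=> i /andP[i0 im]; apply/eqP => ir.
  have /m_min : (0 < i <= #|T|) && (pos i == r) by rewrite i0 ir eqxx; lia.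
  lia.
have cr : bfl_crossed m.
  by rewrite -(prednK m0); apply: bfl_crossedS (bfl_crossed_no_return nr) nr.
have mE : m = #|T| by apply/eqP; rewrite eqn_leq mT bfl_return_card.
by rewrite -mE.
Qed.

Lemma bfl_pos_card : pos #|T| = r.
Proof. by case: bfl_first_return. Qed.

Lemma bfl_pos_neq_root i : 0 < i < #|T| -> pos i != r.
Proof.
case: bfl_first_return => _ nr /andP[i0 iT]; apply: nr.
by rewrite i0 -ltnS prednK ?rmap_card_gt0.
Qed.

Lemma bfl_pos_inj i j : i < #|T| -> j < #|T| -> pos i = pos j -> i = j.
Proof.
case: bfl_first_return => _ nr; have cr := bfl_crossed_no_return nr.
move=> iT jT; apply: (bfl_pos_uniq cr nr); rewrite -ltnS prednK ?rmap_card_gt0 //.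
Qed.

Lemma size_bfl : size (bfl G) = #|T|.
Proof.
have nT := prednK (rmap_card_gt0 G).
have tlE : [seq pos i.+1 | i <- iota 0 #|T|] =
           rcons [seq pos i.+1 | i <- iota 0 #|T|.-1] r.
  rewrite -{1}nT -addn1 iotaD add0n map_cat cats1; congr rcons.
  by change (pos #|T|.-1.+1 = r); rewrite nT bfl_pos_card.
have r_tl : r \notin [seq pos i.+1 | i <- iota 0 #|T|.-1].
  apply/mapP=> -[i]; rewrite mem_iota add0n => iT /esym/eqP; apply/negP.
  by apply: bfl_pos_neq_root; rewrite -nT ltnS.
rewrite /bfl bfl_iterE tlE -cats1 index_cat (negbTE r_tl) /= eqxx addn0.
by rewrite take_size_cat ?size_map ?size_iota.
Qed.

Lemma corner_okE k : corner_ok G k = (0 < k <= #|T|).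
Proof. by rewrite /corner_ok size_bfl. Qed.

End BFL.

Lemma corner_neq_root (G : rmap) k :
  rooted_map G -> corner_ok G k -> 1 < k -> corner G k != rt G.
Proof.
case=> G_inj G_inv G_root G_conn k_ok k1; rewrite cornerE //.
apply: bfl_pos_neq_root => //; move: k_ok; rewrite corner_okE // => /andP[_ kT].
by rewrite -ltnS prednK ?kT ?andbT; lia.
Qed.

Lemma corner_inj (G : rmap) i j : rooted_map G ->
  corner_ok G i -> corner_ok G j -> corner G i = corner G j -> i = j.
Proof.
case=> G_inj G_inv G_root G_conn i_ok j_ok; rewrite !cornerE //.
move: i_ok j_ok; rewrite !corner_okE // => /andP[i0 iT] /andP[j0 jT].
move/bfl_pos_inj => /(_ G_inj G_inv G_root G_conn) ij.
by rewrite -(prednK i0) -(prednK j0) ij // prednK.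
Qed.

Lemma connect_retract (T T' : finType) (e : rel T) (e' : rel T')
    (i : T -> T') (p : T' -> T) :
  cancel i p ->
  (forall x y, e x y -> connect e' (i x) (i y)) ->
  (forall x y, e' x y -> connect e (p x) (p y)) ->
  forall u v, connect e' (i u) (i v) = connect e u v.
Proof.
move=> ipK ie pe' u v; apply/idP/idP; last exact: homo_connect.
by move/(homo_connect pe'); rewrite !ipK.
Qed.

Lemma fconnect_gen_rel (T : finType) (s a : T -> T) x y :
  fconnect s x y -> connect (gen_rel s a) x y.
Proof. by apply: connect_sub => u _ /eqP<-; apply: connect1; rewrite /gen_rel eqxx. Qed.

(* The current alpha of R_ k N after the first BFL step, which cuts the new
   edge {None, Some None}. *)
Definition R_al_cut (T : Type) (a : T -> T) (x : option (option T)) :=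
  if x is Some (Some h) then Some (Some (a h)) else x.

Section RBfl.
Variables (N : rmap) (k : nat).
Local Notation T := (hs N).
Local Notation s := (sg N).
Local Notation r := (rt N).
Local Notation c := (corner N k).
Local Notation RN := (R_ k N).

Definition R_state (st : (T -> T) * T) : (hs RN -> hs RN) * hs RN :=
  (R_al_cut st.1, Some (Some st.2)).

Lemma R_sg_fconnect h : fconnect (sg RN) (Some (Some h)) (Some (Some (s h))).
Proof.
pose n := if h == r then (if c == r then 3 else 2) else if h == c then 2 else 1.
have <- : iter n (sg RN) (Some (Some h)) = Some (Some (s h)); last exact: fconnect_iter.
rewrite /n; have [->|hr] := eqVneq h r; last have [hc|hc] := eqVneq h c.
- have [cr|cr] := eqVneq c r; first by rewrite /= eqxx /= cr eqxx.
  by rewrite /= eqxx /= (negbTE cr).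
- by rewrite /= (negbTE hr) hc eqxx.
- by rewrite /= (negbTE hr) (negbTE hc).
Qed.

Lemma connect_R_al_cut b u v :
  connect (gen_rel (sg RN) (R_al_cut b)) (Some (Some u)) (Some (Some v)) =
  connect (gen_rel s b) u v.
Proof.
pose p (x : hs RN) := if x is Some (Some h) then h else if x is None then r else c.
apply: (connect_retract (i := fun h => Some (Some h)) (p := p)) => // x y.
  case/orP=> /eqP->; first exact/fconnect_gen_rel/R_sg_fconnect.
  by apply: connect1; rewrite /gen_rel eqxx orbT.
have s_step h : connect (gen_rel s b) h (s h) by apply: connect1; rewrite /gen_rel eqxx.
case/orP=> /eqP->; last first.
  by case: x => [[h|]|]; rewrite ?connect0 //= connect1 // /gen_rel eqxx orbT.
case: x => [[h|]|] /=; last 2 first.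
- exact: s_step.
- by case: ifP => [/eqP cr|_]; [rewrite /p cr; apply: connect0 | apply: s_step].
case: ifP => [/eqP-> |_]; first exact: connect0.
by case: ifP => [/eqP-> |_]; [apply: connect0 | apply: s_step].
Qed.

Lemma cut_R_al_cut a h :
  cut (R_al_cut a) (Some (Some h)) = R_al_cut (cut a h) :> (hs RN -> hs RN).
Proof.
by apply: functional_extensionality => -[[x|]|] //; rewrite /cut /=; case: ifP.
Qed.

Lemma bfl_move_R a h :
  bfl_move (G := RN) (R_al_cut a) (Some (Some h)) = R_state (bfl_move (G := N) a h).
Proof.
rewrite /bfl_move /R_state.
have -> : is_bridge (G := RN) (R_al_cut a) (Some (Some h)) = is_bridge (G := N) a h.
  by rewrite /is_bridge /= cut_R_al_cut connect_R_al_cut.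
by case: ifP => _ //; rewrite cut_R_al_cut.
Qed.

Lemma bfl_step_R st : st.2 != r -> st.2 != c ->
  bfl_step (G := RN) (R_state st) = R_state (bfl_step (G := N) st).
Proof.
case: st => a h /= hr hc.
change (bfl_move (G := RN) (R_al_cut a) (sg RN (Some (Some h))) =
        R_state (bfl_move a (s h))).
by rewrite [sg RN _]/= (negbTE hr) (negbTE hc) bfl_move_R.
Qed.

Hypothesis N_map : rooted_map N.
Hypothesis k_ok : corner_ok N k.

Let N_inj : injective s. Proof. by case: N_map. Qed.
Let N_inv : involutive (al N). Proof. by case: N_map. Qed.
Let N_root : al N r = r. Proof. by case: N_map. Qed.
Let N_conn : forall x y, connect (gen_rel s (al N)) x y. Proof. by case: N_map. Qed.
Let k_gt0 : 0 < k. Proof. by case/andP: k_ok. Qed.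
Let k_le : k <= #|T|. Proof. by move: k_ok; rewrite corner_okE // => /andP[]. Qed.
Let cE : c = bfl_pos N k.-1. Proof. exact: cornerE. Qed.

Let pos_neq_root n : 0 < n < #|T| -> bfl_pos N n != r.
Proof. exact: bfl_pos_neq_root. Qed.

Let pos_neq_c n : n < #|T| -> n != k.-1 -> bfl_pos N n != c.
Proof.
move=> nT; apply: contra_neq; rewrite cE; apply: bfl_pos_inj => //.
by rewrite prednK.
Qed.

Lemma bfl_state_R1 : bfl_state RN 1 = (R_al_cut (al N), None).
Proof.
have cut_al : cut (@R_al N) None = R_al_cut (al N).
  by apply: functional_extensionality => -[[x|]|].
rewrite bfl_stateS /bfl_move /= eqxx /= cut_al.
suff -> : is_bridge (G := RN) (@R_al N) None = false by [].
apply/negbTE; rewrite /is_bridge /= cut_al negbK.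
have [cr|cr] := eqVneq c r; first by apply: connect1; rewrite /gen_rel /= cr eqxx.
have sR x : connect (gen_rel (sg RN) (R_al_cut (al N))) x (sg RN x).
  by apply: connect1; rewrite /gen_rel eqxx.
have sR_root : sg RN None = Some (Some (s r)) by rewrite /= (negbTE cr).
have sR_c : sg RN (Some (Some c)) = Some None by rewrite /= (negbTE cr) eqxx.
apply: connect_trans (sR None) _; rewrite sR_root -sR_c.
by apply: connect_trans _ (sR _); rewrite connect_R_al_cut.
Qed.

Lemma bfl_state_R_before n : 0 < n < k -> bfl_state RN n.+1 = R_state (bfl_state N n).
Proof.
case: n => // n; elim: n => [|n IH] nk.
  have cr : c != r by rewrite cE pos_neq_root //; lia.
  by rewrite bfl_stateS bfl_state_R1 /= (negbTE cr) bfl_move_R.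
rewrite [LHS]/bfl_state iterS -/(bfl_state _ _) IH ?bfl_step_R //; last lia.
- by apply: pos_neq_root; lia.
- by apply: pos_neq_c; lia.
Qed.

Lemma bfl_state_R_corner : bfl_state RN k.+1 = (R_al_cut (bfl_alpha N k.-1), Some None).
Proof.
have [k1|k1] := eqVneq k 1.
  have cr : c = r by rewrite cE k1.
  have -> : k.+1 = 2 by rewrite k1.
  by rewrite bfl_stateS bfl_state_R1 /= cr eqxx /bfl_move /= k1.
rewrite bfl_stateS -[in bfl_state RN k](prednK k_gt0) bfl_state_R_before; last lia.
have cr : c != r by rewrite cE pos_neq_root //; lia.
by rewrite /= -cE (negbTE cr) eqxx.
Qed.

Lemma bfl_state_R_after n : k <= n < #|T| -> bfl_state RN n.+2 = R_state (bfl_state N n).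
Proof.
case/andP=> /subnKC <-; elim: (n - k) => [|d IH] kdT.
  rewrite addn0 bfl_stateS bfl_state_R_corner /= bfl_move_R.
  by rewrite -[in bfl_state N k](prednK k_gt0) bfl_stateS -cE.
rewrite addnS [LHS]/bfl_state iterS -/(bfl_state _ _) IH ?bfl_step_R //; last lia.
- by apply: pos_neq_root; lia.
- by apply: pos_neq_c; lia.
Qed.

End RBfl.

(* The current alpha of Ins M l N while the BFL runs through N or M; the new
   bridge {None, Some (inr (rt M))} is never cut. *)
Definition ins_alpha (N M : rmap) (aN : hs N -> hs N) (aM : hs M -> hs M)
    (x : option (hs N + hs M)) : option (hs N + hs M) :=
  match x with
  | None => Some (inr (rt M))
  | Some (inl h) => Some (inl (aN h))
  | Some (inr m) => if m == rt M then None else Some (inr (aM m))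
  end.

Section InsBfl.
Variables (M G : rmap) (l : nat).
Local Notation T := (hs G).
Local Notation s := (sg G).
Local Notation rM := (rt M).
Local Notation c := (corner G l).
Local Notation IG := (Ins M l G).
Implicit Types (aN bN : T -> T) (aM bM : hs M -> hs M).

Definition in_M (x : hs IG) : bool := if x is Some (inr _) then true else false.

Lemma Ins_sg_fconnect h : fconnect (sg IG) (Some (inl h)) (Some (inl (s h))).
Proof.
have [hc|hc] := eqVneq h c; last by apply/connect1; rewrite /= (negbTE hc).
by apply: connect_trans (fconnect1 _ _) _; rewrite /= hc eqxx; apply: fconnect1.
Qed.

Lemma connect_ins_alpha_N bN bM u v :
  connect (gen_rel (sg IG) (ins_alpha bN bM)) (Some (inl u)) (Some (inl v)) =
  connect (gen_rel s bN) u v.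
Proof.
pose p (x : hs IG) := if x is Some (inl h) then h else c.
apply: (connect_retract (i := fun h => Some (inl h)) (p := p)) => // x y.
  case/orP=> /eqP->; first exact/fconnect_gen_rel/Ins_sg_fconnect.
  by apply: connect1; rewrite /gen_rel eqxx orbT.
have s_step h : connect (gen_rel s bN) h (s h) by apply: connect1; rewrite /gen_rel eqxx.
case/orP=> /eqP->; case: x => [[h|m]|] /=; rewrite ?connect0 //.
- by case: ifP => [/eqP->|_]; [apply: connect0 | apply: s_step].
- by apply: connect1; rewrite /gen_rel eqxx orbT.
- by case: ifP.
Qed.

Lemma connect_ins_alpha_M bN bM u v : bM rM = rM ->
  connect (gen_rel (sg IG) (ins_alpha bN bM)) (Some (inr u)) (Some (inr v)) =
  connect (gen_rel (sg M) bM) u v.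
Proof.
move=> bMr; pose p (x : hs IG) := if x is Some (inr m) then m else rM.
apply: (connect_retract (i := fun m => Some (inr m)) (p := p)) => // x y.
  case/orP=> /eqP->; first by apply: connect1; rewrite /gen_rel eqxx.
  have [->|xr] := eqVneq x rM; first by rewrite bMr; apply: connect0.
  by apply: connect1; rewrite /gen_rel /= (negbTE xr) eqxx orbT.
case/orP=> /eqP->; case: x => [[h|m]|] /=; rewrite ?connect0 //.
- by case: ifP.
- by apply: connect1; rewrite /gen_rel eqxx.
- case: ifP => [/eqP->|_]; first exact: connect0.
  by apply: connect1; rewrite /gen_rel eqxx orbT.
Qed.

Lemma cut_ins_alpha_N aN aM h :
  cut (ins_alpha aN aM) (Some (inl h)) = ins_alpha (cut aN h) aM.
Proof.
by apply: functional_extensionality => -[[x|m]|] //; rewrite /cut /=; case: ifP.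
Qed.

Lemma cut_ins_alpha_M aN aM m :
  involutive aM -> aM rM = rM -> m != rM ->
  cut (ins_alpha aN aM) (Some (inr m)) = ins_alpha aN (cut aM m).
Proof.
move=> aM_inv aMr mr; have amr : (rM == aM m) = false.
  by apply/negbTE; apply: contra_neq mr => /(congr1 aM); rewrite aM_inv aMr.
apply: functional_extensionality => -[[x|m']|] /=; rewrite /cut /= ?(negbTE mr) //.
have [->|m'r] := eqVneq m' rM.
  by rewrite -[_ || _]/((rM == m) || (rM == aM m)) eq_sym (negbTE mr) amr.
by rewrite -[_ || _]/((m' == m) || (m' == aM m)); case: ifP.
Qed.

Lemma bfl_move_Ins_N aN aM h :
  bfl_move (G := IG) (ins_alpha aN aM) (Some (inl h)) =
  (ins_alpha (bfl_move aN h).1 aM, Some (inl (bfl_move aN h).2)).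
Proof.
rewrite /bfl_move.
have -> : is_bridge (G := IG) (ins_alpha aN aM) (Some (inl h)) = is_bridge (G := G) aN h.
  by rewrite /is_bridge /= cut_ins_alpha_N connect_ins_alpha_N.
by case: ifP => _ //; rewrite cut_ins_alpha_N.
Qed.

Lemma bfl_move_Ins_M aN aM m :
  involutive aM -> aM rM = rM -> m != rM ->
  bfl_move (G := IG) (ins_alpha aN aM) (Some (inr m)) =
  (ins_alpha aN (bfl_move aM m).1, Some (inr (bfl_move aM m).2)).
Proof.
move=> aM_inv aMr mr; rewrite /bfl_move /= (negbTE mr).
have -> : is_bridge (G := IG) (ins_alpha aN aM) (Some (inr m)) = is_bridge (G := M) aM m.
  rewrite /is_bridge /= (negbTE mr) (cut_ins_alpha_M _ aM_inv aMr mr).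
  by rewrite connect_ins_alpha_M // cut_fixed.
by case: ifP => _; rewrite ?(cut_ins_alpha_M _ aM_inv aMr mr) /= (negbTE mr).
Qed.

Lemma in_M_cut_new aN aM x y :
  connect (gen_rel (sg IG) (cut (ins_alpha aN aM) None)) x y -> in_M x = in_M y.
Proof.
move=> xy; apply/eqP.
apply: (connect_stable (P := fun z => in_M x == in_M z) _ (eqxx _) xy).
move=> u v /eqP-> /orP[] /eqP->; first by case: u => [[h|m]|] //=; case: ifP.
case: u => [[h|m]|] //; rewrite /cut /= -[(Some (inr m) : hs IG) == _]/(m == rM).
by case: (m == rM).
Qed.

Lemma is_bridge_ins_new aN aM : is_bridge (G := IG) (ins_alpha aN aM) None.
Proof. by rewrite /is_bridge /=; apply/negP => /in_M_cut_new. Qed.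

Lemma bfl_move_Ins_enter aN aM :
  bfl_move (G := IG) (ins_alpha aN aM) None = (ins_alpha aN aM, Some (inr rM)).
Proof. by rewrite /bfl_move is_bridge_ins_new orbT. Qed.

Lemma bfl_move_Ins_exit aN aM :
  bfl_move (G := IG) (ins_alpha aN aM) (Some (inr rM)) = (ins_alpha aN aM, None).
Proof.
have cutE : cut (ins_alpha aN aM) (Some (inr rM)) =1 cut (ins_alpha aN aM) None.
  by move=> x; rewrite /cut /= eqxx orbC.
suff br : is_bridge (G := IG) (ins_alpha aN aM) (Some (inr rM)).
  by rewrite /bfl_move br orbT /= eqxx.
rewrite /is_bridge /= eqxx /=; apply/negP.
rewrite (eq_connect (e' := gen_rel (sg IG) (cut (ins_alpha aN aM) None))).
  by move/in_M_cut_new.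
by move=> u v; rewrite /gen_rel cutE.
Qed.

Hypothesis M_map : rooted_map M.
Hypothesis G_map : rooted_map G.
Hypothesis l_ok : corner_ok G l.

Let M_inj : injective (sg M). Proof. by case: M_map. Qed.
Let M_inv : involutive (al M). Proof. by case: M_map. Qed.
Let M_root : al M rM = rM. Proof. by case: M_map. Qed.
Let M_conn : forall x y, connect (gen_rel (sg M) (al M)) x y. Proof. by case: M_map. Qed.
Let G_inj : injective s. Proof. by case: G_map. Qed.
Let G_inv : involutive (al G). Proof. by case: G_map. Qed.
Let G_root : al G (rt G) = rt G. Proof. by case: G_map. Qed.
Let G_conn : forall x y, connect (gen_rel s (al G)) x y. Proof. by case: G_map. Qed.
Let l_gt0 : 0 < l. Proof. by case/andP: l_ok. Qed.
Let l_le : l <= #|T|. Proof. by move: l_ok; rewrite corner_okE // => /andP[]. Qed.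
Let cE : c = bfl_pos G l.-1. Proof. exact: cornerE. Qed.

Let pos_neq_c n : n < #|T| -> n != l.-1 -> bfl_pos G n != c.
Proof.
move=> nT; apply: contra_neq; rewrite cE; apply: bfl_pos_inj => //.
by rewrite prednK.
Qed.

Lemma bfl_state_Ins_before n : n < l ->
  bfl_state IG n = (ins_alpha (bfl_alpha G n) (al M), Some (inl (bfl_pos G n))).
Proof.
elim: n => [|n IH] nl.
  by congr (_, _); apply: functional_extensionality => -[[x|m]|].
rewrite bfl_stateS IH ?(ltnW nl) //= ifN ?pos_neq_c; try lia.
by rewrite bfl_move_Ins_N -bfl_stateS.
Qed.

Lemma bfl_state_Ins_enter :
  bfl_state IG l = (ins_alpha (bfl_alpha G l.-1) (al M), Some (inr rM)).
Proof.
rewrite -[in bfl_state IG l](prednK l_gt0) bfl_stateS bfl_state_Ins_before; last lia.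
by rewrite /= -cE eqxx bfl_move_Ins_enter.
Qed.

Lemma bfl_state_Ins_M i : i < #|hs M| ->
  bfl_state IG (l + i) =
  (ins_alpha (bfl_alpha G l.-1) (bfl_alpha M i), Some (inr (bfl_pos M i))).
Proof.
elim: i => [|i IH] iM; first by rewrite addn0 bfl_state_Ins_enter.
have pr : sg M (bfl_pos M i) != rM.
  rewrite -(inj_eq (can_inj (bfl_alpha_involutive M_inv i.+1))) bfl_alpha_root //.
  rewrite -bfl_posS; exact: bfl_pos_neq_root.
rewrite addnS bfl_stateS IH ?(ltnW iM) //.
rewrite bfl_move_Ins_M ?bfl_alpha_root -?bfl_stateS //; exact: bfl_alpha_involutive.
Qed.

Lemma bfl_state_Ins_exit :
  bfl_state IG (l + #|hs M|) =
  (ins_alpha (bfl_alpha G l.-1) (bfl_alpha M #|hs M|.-1), None).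
Proof.
have M_gt0 := rmap_card_gt0 M.
rewrite -[in l + _](prednK M_gt0) addnS bfl_stateS bfl_state_Ins_M ?prednK //=.
have -> : sg M (bfl_pos M #|hs M|.-1) = rM.
  apply: (can_inj (bfl_alpha_involutive M_inv #|hs M|.-1.+1)).
  by rewrite -bfl_posS prednK // bfl_pos_card // bfl_alpha_root.
exact: bfl_move_Ins_exit.
Qed.

Lemma bfl_state_Ins_after n : l <= n -> n < #|T| ->
  bfl_state IG (n + #|hs M|).+1 =
  (ins_alpha (bfl_alpha G n) (bfl_alpha M #|hs M|.-1), Some (inl (bfl_pos G n))).
Proof.
elim: n => [|n IH] ln nT; first by move: ln l_gt0; rewrite leqn0 => /eqP->.
have [nl|ln'] := eqVneq n.+1 l.
  have nE : l.-1 = n by rewrite -nl.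
  rewrite {1}nl bfl_stateS bfl_state_Ins_exit /= bfl_move_Ins_N.
  by rewrite cE nE -bfl_stateS.
have ln1 : l <= n by lia.
have nT1 : n < #|T| := ltnW nT.
rewrite addSn bfl_stateS IH //= ifN ?pos_neq_c //; last lia.
by rewrite bfl_move_Ins_N -bfl_stateS.
Qed.

End InsBfl.

Lemma closed_map_msize (M : rmap) : closed_map M -> 2 * msize M = #|hs M|.+1.
Proof.
case=> [[_ M_inv M_root _] M_fix].
have al_inj := can_inj M_inv.
have orbit_al x : fconnect (al M) x =i pred2 x (al M x).
  move=> y; apply/idP/idP => [/iter_findex <-|]; last first.
    by case/pred2P=> ->; [apply: connect0 | apply: fconnect1].
  elim: (findex _ _ _) => [|n IH] /=; first by rewrite !inE eqxx.
  by case/pred2P: IH => ->; rewrite !inE ?M_inv eqxx ?orbT.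
have order_al x : order (al M) x = (x != rt M).+1.
  rewrite /order (eq_card (orbit_al x)) card2.
  have [->|xr] := eqVneq x (rt M); first by rewrite M_root eqxx.
  by case: eqP => // /esym/M_fix xE; rewrite xE eqxx in xr.
have al_root x : (al M x == rt M) = (x == rt M) by rewrite -{1}M_root (inj_eq al_inj).
have fcard_root : fcard (al M) (pred1 (rt M)) * 1 = #|pred1 (rt M)|.
  apply: fcard_order_set => //; last by move=> x y /eqP<-; rewrite !inE al_root.
  by apply/subsetP => x /eqP->; rewrite inE order_al eqxx.
have fcard_rest : fcard (al M) (predC1 (rt M)) * 2 = #|predC1 (rt M)|.
  apply: fcard_order_set => //; last by move=> x y /eqP<-; rewrite !inE al_root.
  by apply/subsetP => x; rewrite !inE order_al => ->.
rewrite muln1 card1 in fcard_root; rewrite cardC1 in fcard_rest.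
rewrite /msize (n_compC (pred1 (rt M))) fcard_root.
rewrite (eq_n_comp_r (a' := predC1 (rt M))) => [|x]; last by rewrite !inE.
by rewrite mulnDr muln1 [2 * _]mulnC fcard_rest add2n prednK // rmap_card_gt0.
Qed.

Definition R_at (N : rmap) (c : hs N) : rmap :=
  @RMap (option (option (hs N))) (R_sg c) (@R_al N) (Some (Some (rt N))).

Definition Ins_at (M N : rmap) (c : hs N) : rmap :=
  @RMap (option (hs N + hs M)) (Ins_sg c) (@Ins_al M N) (Some (inl (rt N))).

Arguments R_at : clear implicits.
Arguments Ins_at : clear implicits.

Section InsR.
Variables (M N : rmap).
Local Notation r := (rt N).

(* Where M is inserted in R_at N c (the corner after an old half-edge d, after
   the new half-edge at c, or after the new half-edge at the root) and where the
   new edge lands in Ins_at M N d (at the old corner c, or after the new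
   bridge): in these matching situations the two constructions commute. *)
Inductive ins_R_corners (c d : hs N) :
    option (option (hs N)) -> option (hs N + hs M) -> Prop :=
  | InsR_apart of d != r & d != c : ins_R_corners c d (Some (Some d)) (Some (inl c))
  | InsR_new of d = c : ins_R_corners c d (Some None) (Some (inl c))
  | InsR_root_root of d = r & c = r : ins_R_corners c d None None
  | InsR_root of d = r & c != r : ins_R_corners c d None (Some (inl c))
  | InsR_same of d = c & c != r : ins_R_corners c d (Some (Some d)) None.

Definition ins_R_relabel (x : option (option (option (hs N)) + hs M)) :
    option (option (option (hs N + hs M))) :=
  match x with
  | None => Some (Some None)
  | Some (inl None) => None
  | Some (inl (Some None)) => Some None
  | Some (inl (Some (Some h))) => Some (Some (Some (inl h)))
  | Some (inr m) => Some (Some (Some (inr m)))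
  end.

Definition ins_R_unlabel (y : option (option (option (hs N + hs M)))) :
    option (option (option (hs N)) + hs M) :=
  match y with
  | None => Some (inl None)
  | Some None => Some (inl (Some None))
  | Some (Some None) => None
  | Some (Some (Some (inl h))) => Some (inl (Some (Some h)))
  | Some (Some (Some (inr m))) => Some (inr m)
  end.

Lemma iso_Ins_R_at c d CL CR : ins_R_corners c d CL CR ->
  iso (Ins_at M (R_at N c) CL) (R_at (Ins_at M N d) CR).
Proof.
move=> cfg; exists ins_R_relabel; split=> //.
- by exists ins_R_unlabel => [[[[[h|]|]|m]|]|[[[[h|m]|]|]|]].
- case: cfg => [/eqP dr /eqP dc|->|-> ->|-> /eqP cr|-> /eqP cr] [[[[h|]|]|m]|] //=;
    by do ?[case: eqP => //= ?; subst]; congruence.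
- by move=> [[[[h|]|]|m]|] //=; case: eqP.
Qed.

End InsR.

Lemma iso_Ins_R_le (M N : rmap) k l : rooted_map N -> k <= l ->
  corner_ok N k -> corner_ok (R_ k N) l.+2 -> corner_ok N l -> corner_ok (Ins M l N) k ->
  iso (Ins M l.+2 (R_ k N)) (R_ k (Ins M l N)).
Proof.
move=> N_map kl k_ok lR_ok l_ok kI_ok; have [N_inj N_inv N_root N_conn] := N_map.
have /andP[k0 kT] : 0 < k <= #|hs N| by rewrite -corner_okE.
have /andP[l0 lT] : 0 < l <= #|hs N| by rewrite -corner_okE.
have CR : corner (Ins M l N) k = Some (inl (corner N k)).
  by rewrite cornerE // bfl_state_Ins_before ?(cornerE k_ok) //; lia.
apply: (iso_Ins_R_at (c := corner N k) (d := corner N l)).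
rewrite CR (cornerE lR_ok) [_.-1]/=.
have [<-|lk] := eqVneq l k; first by rewrite bfl_state_R_corner //; apply: InsR_new.
rewrite -[in bfl_state _ l.+1](prednK l0) bfl_state_R_after //; try lia.
rewrite [(R_state _ _).2]/= -(cornerE l_ok); apply: InsR_apart.
  by apply: corner_neq_root => //; lia.
by apply/eqP => /(corner_inj N_map l_ok k_ok) /eqP; rewrite (negbTE lk).
Qed.

Lemma iso_Ins_R_ge (M N : rmap) k l : rooted_map M -> rooted_map N -> 0 < l <= k ->
  corner_ok N k -> corner_ok (R_ k N) l.+1 -> corner_ok N l ->
  corner_ok (Ins M l N) (k + #|hs M|).+1 ->
  iso (Ins M l.+1 (R_ k N)) (R_ (k + #|hs M|).+1 (Ins M l N)).
Proof.
move=> M_map N_map /andP[l0 lk] k_ok lR_ok l_ok kI_ok.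
have [N_inj N_inv N_root N_conn] := N_map.
have /andP[k0 kT] : 0 < k <= #|hs N| by rewrite -corner_okE.
have CL : corner (R_ k N) l.+1 = if l == 1 then None else Some (Some (corner N l)).
  rewrite (cornerE lR_ok) [_.-1]/=.
  case: eqVneq => [->|l1]; first by rewrite bfl_state_R1.
  by rewrite -[in bfl_state _ l](prednK l0) bfl_state_R_before ?(cornerE l_ok) //; lia.
have CR : corner (Ins M l N) (k + #|hs M|).+1 =
          if k == l then None else Some (inl (corner N k)).
  rewrite (cornerE kI_ok) [_.-1]/=.
  case: eqVneq => [->|kl]; first by rewrite bfl_state_Ins_exit.
  rewrite -[in k + _](prednK k0) addSn bfl_state_Ins_after ?(cornerE k_ok) //; lia.
apply: (iso_Ins_R_at (c := corner N k) (d := corner N l)); rewrite CL CR.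
have [l1|l1] := eqVneq l 1; have [kl|kl] := eqVneq k l.
- by apply: InsR_root_root; rewrite ?kl l1.
- apply: InsR_root; first by rewrite l1.
  by apply: corner_neq_root => //; lia.
- rewrite kl; apply: InsR_same => //.
  by apply: corner_neq_root => //; lia.
- apply: InsR_apart; first by apply: corner_neq_root => //; lia.
  by apply/eqP => /(corner_inj N_map l_ok k_ok) /eqP; rewrite eq_sym (negbTE kl).
Qed.

Unset Implicit Arguments.
Theorem lemma3p5 (M N : rmap) (k l : nat) :
  closed_map M -> rooted_map N ->
  (k <= l - 2 ->
     corner_ok N k -> corner_ok (R_ k N) l ->
     corner_ok N (l - 2) -> corner_ok (Ins M (l - 2) N) k ->
     iso (Ins M l (R_ k N)) (R_ k (Ins M (l - 2) N))) /\
  (1 <= l - 1 <= k ->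
     corner_ok N k -> corner_ok (R_ k N) l ->
     corner_ok N (l - 1) -> corner_ok (Ins M (l - 1) N) (k + 2 * msize M) ->
     iso (Ins M l (R_ k N)) (R_ (k + 2 * msize M) (Ins M (l - 1) N))).
Proof.
move=> M_closed N_map; have M_map : rooted_map M by case: M_closed.
split=> [kl k_ok | lk].
- have [l' lE] : exists l', l = l'.+2.
    by exists (l - 2); move: k_ok; rewrite /corner_ok; lia.
  rewrite lE !subSS subn0 in kl *; exact: iso_Ins_R_le.
- have [l' lE] : exists l', l = l'.+1 by exists (l - 1); lia.
  rewrite lE subn1 /= (closed_map_msize M_closed) addnS in lk *.
  exact: iso_Ins_R_ge.
Qed.
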